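(* Let $\mathcal{L}=(n,\mathcal{M},\mathcal{C})$ be a linearization and let $\mathcal{T}\subseteq\mathcal{P}$ be a subset of the proper monomials. A binary vector $y\in\{0,1\}^{\mathcal{S}\cup\mathcal{T}}$ can be extended to a vector $y'\in P(\mathcal{L})\cap\mathbb{Z}^{\mathcal{M}}$ if and only if $y_m=\prod_{i\in m}y_{\{i\}}$ holds for each $m\in\mathcal{T}$.
   Context: $[n]=\{1,\dots,n\}$; a monomial is a nonempty subset of $[n]$; $\mathcal{S}=\{\{i\}:i\in[n]\}$. A linearization is a triple $\mathcal{L}=(n,\mathcal{M},\mathcal{C})$, where $\mathcal{M}$ is a set of monomials with $\mathcal{S}\subseteq\mathcal{M}$ and $\mathcal{C}$ is a set of AND-constraints; each AND-constraint is a set $c\subseteq\mathcal{M}$ whose union $\bigcup c$ lies in $\mathcal{M}$. $\mathcal{P}=\mathcal{M}\setminus\mathcal{S}$. Linearizations are assumed consistent: for each $m\in\mathcal{P}$ there is $c\in\mathcal{C}$ with $\bigcup c=m$ and $|m'|<|m|$ for all $m'\in c$. $P(\mathcal{L})\subseteq\mathbb{R}^{\mathcal{M}}$ is the set of $y$ with $0\le y_m\le1$ for all $m\in\mathcal{M}$, $y_{\bigcup c}\le y_m$ for all $c\in\mathcal{C}$, $m\in c$, and $\sum_{m\in c}y_m\le y_{\bigcup c}+|c|-1$ for all $c\in\mathcal{C}$. *)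

From mathcomp Require Import all_boot all_order all_algebra.
Set Implicit Arguments. Unset Strict Implicit. Unset Printing Implicit Defensive.
Import Order.TTheory GRing.Theory Num.Theory.
Local Open Scope ring_scope.

(* Variables are indexed by 'I_n (i.e. [n] = {1..n} shifted to {0..n-1}).
   A monomial is a nonempty subset of 'I_n. *)

Definition singletons (n : nat) : {set {set 'I_n}} := [set [set i] | i : 'I_n].

Definition cunion (n : nat) (c : {set {set 'I_n}}) : {set 'I_n} :=
  \bigcup_(m in c) m.

Definition is_linearization (n : nat) (M : {set {set 'I_n}})
    (C : {set {set {set 'I_n}}}) : Prop :=
  [/\ (forall m, m \in M -> m != set0),
      singletons n \subset M,
      (forall c, c \in C -> c \subset M /\ cunion c \in M) &
      (forall m, m \in M :\: singletons n ->
         exists2 c, c \in C &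
           cunion c = m /\ (forall m', m' \in c -> #|m'| < #|m|)%N)].

Definition proper_monomials (n : nat) (M : {set {set 'I_n}}) :=
  M :\: singletons n.

Definition in_PL (R : realFieldType) (n : nat) (M : {set {set 'I_n}})
    (C : {set {set {set 'I_n}}}) (y : {set 'I_n} -> R) : Prop :=
  [/\ (forall m, m \in M -> 0 <= y m <= 1),
      (forall c m, c \in C -> m \in c -> y (cunion c) <= y m) &
      (forall c, c \in C ->
         \sum_(m in c) y m <= y (cunion c) + (#|c|%:R - 1))].

From mathcomp Require Import all_boot all_order all_algebra.
From mathcomp Require Import zify lra.
Set Implicit Arguments.
Unset Strict Implicit.
Unset Printing Implicit Defensive.
Import Order.TTheory GRing.Theory Num.Theory.
Local Open Scope ring_scope.

(* On 0/1 values an AND-constraint c holds exactly when y (cunion c) is the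
   product of the y m, m in c, and a product of 0/1 values over a union of
   monomials is the product of the products over the monomials. So, by induction
   on |m| along the consistency constraints, an integral point y' of P(L) is
   y'_m = prod_(i in m) y'_{i}; conversely this product vector built from 0/1
   values y_{i} always lies in P(L). *)

Definition binary {R : pzSemiRingType} (x : R) : Prop := x = 0 \/ x = 1.

Section BinaryProducts.

Variable R : comNzRingType.

Lemma binary_eq (a b : R) : binary a -> binary b -> (a = 1 <-> b = 1) -> a = b.
Proof.
move=> [->|->] [->|->] [ab ba] //; first exact: ba.
by rewrite (ab erefl).
Qed.

Lemma prod_binary (I : finType) (f : I -> R) (A : {pred I}) :
  (forall i, binary (f i)) -> binary (\prod_(i in A) f i).
Proof.
move=> f01; apply: (big_ind binary) => [|x y [->|->] [->|->]|i _];
  rewrite ?mul0r ?mul1r; by [right | left | right | exact: f01].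
Qed.

Lemma prod_binary_eq1 (I : finType) (f : I -> R) (A : {pred I}) :
  (forall i, binary (f i)) ->
  \prod_(i in A) f i = 1 <-> {in A, forall i, f i = 1}.
Proof.
move=> f01; split=> [prod1 i iA | all1]; last exact: big1.
case: (f01 i) => // fi0.
by move: prod1; rewrite (bigD1 i) //= fi0 mul0r => /esym/eqP; rewrite oner_eq0.
Qed.

Lemma prod_binary_bigcup (I : finType) (f : I -> R) (c : {set {set I}}) :
  (forall i, binary (f i)) ->
  \prod_(i in \bigcup_(m in c) m) f i = \prod_(m in c) \prod_(i in m) f i.
Proof.
move=> f01; have prod01 (m : {set I}) : binary (\prod_(i in m) f i).
  exact: prod_binary.
apply: binary_eq; [exact: prod_binary | exact: prod_binary |].
rewrite !prod_binary_eq1 //.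
split=> [all1 m mc | all1 i /bigcupP [m mc im]].
  by apply/prod_binary_eq1 => // i im; apply: all1; apply/bigcupP; exists m.
by move: (all1 m mc) => /prod_binary_eq1; apply.
Qed.

End BinaryProducts.

Lemma int_unit_interval_binary (R : numDomainType) (z : int) :
  0 <= (z%:~R : R) <= 1 -> binary (z%:~R : R).
Proof.
rewrite ler0z lerz1 => /andP [z_ge0 z_le1].
have [->|->] : z = 0 \/ z = 1 by lia.
  by left.
by right.
Qed.

Lemma and_constraint_binaryE (R : realDomainType) (I : finType) (c : {set I})
    (x : I -> R) (z : R) :
  {in c, forall i, binary (x i)} -> binary z ->
  (forall i, i \in c -> z <= x i) /\ \sum_(i in c) x i <= z + (#|c|%:R - 1)
  <-> z = \prod_(i in c) x i.
Proof.
move=> x01 z01.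
have [/forall_inP all1 | /forall_inPn [j jc xj1]] :=
  boolP [forall (i | i \in c), x i == 1].
  have x1 i : i \in c -> x i = 1 by move=> /all1 /eqP.
  rewrite [\prod_(i in c) x i]big1 // (eq_bigr _ x1) sumr_const.
  rewrite -[1 *+ _]/(#|c|%:R).
  case: z01 => ->.
    by split=> [[_ sum_le] | /esym/eqP]; [lra | rewrite oner_eq0].
  by split=> // _; split=> [i /x1 -> // | ]; lra.
have xj0 : x j = 0 by case: (x01 j jc) => // xj; rewrite xj eqxx in xj1.
rewrite [\prod_(i in c) x i](bigD1 j) //= xj0 mul0r; split=> [[z_le _] | ->].
  by case: z01 => // z1; move: (z_le j jc); rewrite z1 xj0 ler10.
split=> [i /x01 [|] -> // | ].
have : 1 <= \sum_(i in c) (1 - x i).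
  rewrite (bigD1 j) //= xj0 subr0 lerDl; apply: sumr_ge0 => i /andP [ic _].
  by case: (x01 i ic) => ->; rewrite ?subr0 ?subrr ?ler01.
rewrite sumrB sumr_const -[1 *+ _]/(#|c|%:R); lra.
Qed.

Section Linearization.

Variables (R : realFieldType) (n : nat).
Variables (M : {set {set 'I_n}}) (C : {set {set {set 'I_n}}}).

Lemma in_PL_prod (f : 'I_n -> R) :
  (forall i, binary (f i)) -> in_PL M C (fun m => \prod_(i in m) f i).
Proof.
move=> f01.
have prod01 (m : {set 'I_n}) : binary (\prod_(i in m) f i).
  exact: prod_binary.
have constraint (c : {set {set 'I_n}}) :
    (forall m, m \in c ->
       \prod_(i in cunion c) f i <= \prod_(i in m) f i) /\
    \sum_(m in c) \prod_(i in m) f i <=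
      \prod_(i in cunion c) f i + (#|c|%:R - 1).
  apply/and_constraint_binaryE => [m _ | | ];
    [exact: prod01 | exact: prod01 | exact: prod_binary_bigcup].
split=> [m _ | c m _ mc | c _]; last exact: (proj2 (constraint c)).
  by case: (prod01 m) => ->; rewrite ?lexx ?ler01.
exact: (proj1 (constraint c)).
Qed.

Lemma in_PL_binary_prod (y : {set 'I_n} -> R) :
  is_linearization M C -> in_PL M C y -> {in M, forall m, binary (y m)} ->
  {in M, forall m, y m = \prod_(i in m) y [set i]}.
Proof.
move=> [_ SM CM cons] [_ y_le y_sum] y01.
have s01 i : binary (y [set i]).
  by apply: y01; apply: (subsetP SM); exact: imset_f.
move=> m; have [k] := ubnP #|m|; elim: k m => // k IH m ltmk mM.
have [/imsetP [i _ ->] | ns] := boolP (m \in singletons n).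
  by rewrite big_set1.
have mP : m \in M :\: singletons n by rewrite in_setD ns mM.
have [c cC [cu ltc]] := cons m mP.
have [cM _] := CM c cC.
have IHc m' : m' \in c -> y m' = \prod_(i in m') y [set i].
  move=> m'c; apply: IH (subsetP cM _ m'c).
  exact: leq_trans (ltc _ m'c) ltmk.
rewrite -cu prod_binary_bigcup // -(eq_bigr _ IHc).
apply/and_constraint_binaryE.
- by move=> m' /(subsetP cM) /y01.
- by apply: y01; rewrite cu.
- by split=> [m' /y_le | ]; [exact | exact: y_sum].
Qed.

End Linearization.

Theorem proposition2p1 (R : realFieldType) (n : nat)
    (M : {set {set 'I_n}}) (C : {set {set {set 'I_n}}})
    (T : {set {set 'I_n}}) (y : {set 'I_n} -> R) :
  is_linearization M C ->
  T \subset proper_monomials M ->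
  (forall m, m \in singletons n :|: T -> y m = 0 \/ y m = 1) ->
  ((exists y' : {set 'I_n} -> R,
      [/\ in_PL M C y',
          (forall m, m \in M -> exists z : int, y' m = z%:~R) &
          (forall m, m \in singletons n :|: T -> y' m = y m)])
   <->
   (forall m, m \in T -> y m = \prod_(i in m) y [set i])).
Proof.
move=> lin TP y01.
have singST i : [set i] \in singletons n :|: T by rewrite in_setU imset_f.
split=> [[y' [PL y'int y'y]] | yT].
  have y'01 : {in M, forall m, binary (y' m)}.
    move=> m mM; have [z y'z] := y'int m mM; have [y'_bounds _ _] := PL.
    rewrite y'z; apply: int_unit_interval_binary.
    by rewrite -y'z; exact: y'_bounds.
  move=> m mT.
  have mM : m \in M by move: (subsetP TP m mT); rewrite in_setD => /andP [].
  rewrite -y'y ?in_setU ?mT ?orbT // (in_PL_binary_prod lin PL y'01 mM).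
  by apply: eq_bigr => i _; rewrite y'y.
have ys01 i : binary (y [set i]) by apply: y01.
exists (fun m : {set 'I_n} => \prod_(i in m) y [set i]); split.
- exact: in_PL_prod.
- by move=> m _; case: (prod_binary m ys01) => ->; [exists 0 | exists 1].
- by move=> m /setUP [/imsetP [i _ ->] | /yT ->]; rewrite ?big_set1.
Qed.
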